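(* Let $X_1,\dots,X_d$ be smooth vector fields defined on an open subset of $\mathbb{R}^n$. Consider the following iterative procedure: Step 1: Find the reduced row echelon form of the coefficient matrix of $X_1,\dots,X_d$ (row operations with smooth functions as coefficients, on an open set where the required pivots do not vanish), and let $Y_1,\dots,Y_r$ be the vector fields corresponding to its nonzero rows. If $[Y_i,Y_j]=0$ for all $i,j$, stop. Otherwise go to Step 2. Step 2: If some $[Y_i,Y_j]\neq 0$, set $Y_{r+1}:=[Y_i,Y_j]$, and return to Step 1 with the family $Y_1,\dots,Y_r,Y_{r+1}$ in place of $X_1,\dots,X_d$. Then this process terminates in at most $n$ iterations, and if $V_1,\dots,V_m$ are the (pairwise commuting) vector fields obtained at the end of the process, the (local) joint invariants of $X_1,\dots,X_d$ coincide with the (local) joint invariants of $V_1,\dots,V_m$.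
   Context: A vector field $\sum_{k=1}^n c_k\,\partial/\partial x_k$ is identified with its row of coefficient functions $(c_1,\dots,c_n)$, and a finite family of vector fields with the matrix whose rows are these coefficient rows (its coefficient matrix). A (local) joint invariant of a family of vector fields $Z_1,\dots,Z_m$ is a smooth function $f$ on some open subset with $Z_i(f)=0$ for all $i$. $[\cdot,\cdot]$ denotes the Lie bracket of vector fields. *)

From HB Require Import structures.
From mathcomp Require Import all_boot all_order all_algebra.
From mathcomp Require Import all_classical all_reals all_analysis.
Set Implicit Arguments. Unset Strict Implicit. Unset Printing Implicit Defensive.
Import Order.TTheory GRing.Theory Num.Theory.
Import numFieldNormedType.Exports.
Local Open Scope classical_set_scope.
Local Open Scope ring_scope.

Section VF.
Variables (R : realType) (n : nat).

Definition pt := 'rV[R]_n.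

Definition vfield := pt -> pt.
Definition vf0 : vfield := fun _ => 0.

Definition evec (i : 'I_n) : pt := delta_mx 0 i.

Definition pd (i : 'I_n) (f : pt -> R) (x : pt) : R := 'D_(evec i) f x.

Fixpoint Ck (k : nat) (U : set pt) (f : pt -> R) : Prop :=
  match k with
  | 0 => forall x, U x -> {for x, continuous f}
  | k'.+1 => (forall x, U x -> differentiable f x) /\
             (forall i : 'I_n, Ck k' U (pd i f))
  end.
Definition smooth_on (U : set pt) (f : pt -> R) : Prop := forall k, Ck k U f.

Definition vf_smooth_on (U : set pt) (X : vfield) : Prop :=
  forall k : 'I_n, smooth_on U (fun x => X x 0 k).

Definition vf_apply (X : vfield) (f : pt -> R) : pt -> R :=
  fun x => \sum_(k < n) X x 0 k * pd k f x.

Definition lie (X Y : vfield) : vfield :=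
  fun x => \row_(k < n) (vf_apply X (fun y => Y y 0 k) x
                          - vf_apply Y (fun y => X y 0 k) x).

Definition row_swap (s : seq vfield) (i j : nat) : seq vfield :=
  mkseq (fun k => nth vf0 s (if k == i then j else if k == j then i else k))
        (size s).
Definition row_scale (s : seq vfield) (i : nat) (c : pt -> R) : seq vfield :=
  mkseq (fun k => if k == i then (fun x => c x *: nth vf0 s i x) else nth vf0 s k)
        (size s).
Definition row_addmul (s : seq vfield) (i j : nat) (c : pt -> R) : seq vfield :=
  mkseq (fun k => if k == i then (fun x => nth vf0 s i x + c x *: nth vf0 s j x)
                  else nth vf0 s k) (size s).

Inductive elem_rowop (U : set pt) : seq vfield -> seq vfield -> Prop :=
  | Eswap s i j : (i < size s)%N -> (j < size s)%N ->
      elem_rowop U s (row_swap s i j)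
  | Escale s i c : (i < size s)%N -> smooth_on U c ->
      (forall x, U x -> c x != 0) -> elem_rowop U s (row_scale s i c)
  | Eaddmul s i j c : (i < size s)%N -> (j < size s)%N -> i != j ->
      smooth_on U c -> elem_rowop U s (row_addmul s i j c).

Inductive rowops (U : set pt) : seq vfield -> seq vfield -> Prop :=
  | Rrefl s : rowops U s s
  | Rstep s t u : elem_rowop U s t -> rowops U t u -> rowops U s u.

(* the family Y (rows of the matrix) is in reduced row echelon form on U,
   with (necessarily constant) pivot columns p 0 < p 1 < ... *)
Definition rref_on (U : set pt) (Y : seq vfield) : Prop :=
  exists p : nat -> 'I_n,
    (forall i j, (i < j)%N -> (j < size Y)%N -> (p i < p j)%N) /\
    forall i, (i < size Y)%N -> forall x, U x ->
      [/\ nth vf0 Y i x 0 (p i) = 1,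
          (forall j, (j < size Y)%N -> j != i -> nth vf0 Y j x 0 (p i) = 0)
        & (forall k : 'I_n, (k < p i)%N -> nth vf0 Y i x 0 k = 0)].

(* Y = the nonzero rows of the reduced row echelon form of X, computed on U
   by row operations with smooth coefficients *)
Definition rref_of (U : set pt) (X Y : seq vfield) : Prop :=
  exists Z, [/\ rowops U X Z,
    Y = take (size Y) Z,
    (forall k, (size Y <= k)%N -> (k < size Z)%N -> forall x, U x -> nth vf0 Z k x = 0)
    & rref_on U Y].

Definition coefmx (Z : seq vfield) (x : pt) : 'M[R]_(size Z, n) :=
  \matrix_(i < size Z, j < n) nth vf0 Z i x 0 j.

(* Step 1: on a nonempty open W' inside W, Y is the rref of the family Z;
   W' is chosen where the required pivots do not vanish, i.e. the rref has
   as many nonzero rows as the (generic = maximal) rank of Z on W *)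
Definition step1 (W : set pt) (Z : seq vfield) (W' : set pt) (Y : seq vfield) : Prop :=
  [/\ open W', W' !=set0, W' `<=` W, rref_of W' Z Y &
      forall x, W x -> (\rank (coefmx Z x) <= size Y)%N].

Definition round_continue (W : set pt) (Z : seq vfield) (W' : set pt) (Z' : seq vfield) :=
  exists Y i j, [/\ step1 W Z W' Y, (i < size Y)%N, (j < size Y)%N,
    (exists x, W' x /\ lie (nth vf0 Y i) (nth vf0 Y j) x != 0)
    & Z' = rcons Y (lie (nth vf0 Y i) (nth vf0 Y j))].

(* cont U X k W Z : starting from X on U, after k iterations that each went
   on to Step 2, the process is at Step 1 with family Z on W *)
Inductive cont (U : set pt) (X : seq vfield) : nat -> set pt -> seq vfield -> Prop :=
  | cont0 : cont U X 0 U X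
  | contS k W Z W' Z' : cont U X k W Z -> round_continue W Z W' Z' ->
      cont U X k.+1 W' Z'.

Definition final (U : set pt) (X : seq vfield) (W : set pt) (V : seq vfield) : Prop :=
  exists k W0 Z, [/\ cont U X k W0 Z, step1 W0 Z W V &
    forall i j, (i < size V)%N -> (j < size V)%N -> forall x, W x ->
      lie (nth vf0 V i) (nth vf0 V j) x = 0].

Definition joint_invariant (F : seq vfield) (O : set pt) (f : pt -> R) : Prop :=
  [/\ open O, smooth_on O f &
      forall Z, Z \in F -> forall x, O x -> vf_apply Z f x = 0].

End VF.

(* Invariance: an invertible row operation with smooth coefficients, or the
   removal of identically vanishing rows, does not change which functions a
   family annihilates at a point, and if A f = B f = 0 on an open set then
   [A, B] f = A (B f) - B (A f) = 0 there, by the symmetry of second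
   derivatives of a C^2 function.  So every family of the process has the same
   joint invariants as X.
   Termination: the pivot columns of a reduced row echelon form are constant,
   so the bracket of two of its rows vanishes in every pivot column; a bracket
   that is nonzero at some point is therefore independent of the rows there,
   and the generic rank, hence the size of the family, grows by one in each
   iteration.  As the rank is at most n, fewer than n iterations continue. *)

From HB Require Import structures.
From mathcomp Require Import all_boot all_order all_algebra.
From mathcomp Require Import all_classical all_reals all_analysis.
From mathcomp Require Import zify ring.
Import Order.TTheory GRing.Theory Num.Theory.
Import numFieldNormedType.Exports.
Set Implicit Arguments. Unset Strict Implicit. Unset Printing Implicit Defensive.
Local Open Scope classical_set_scope.
Local Open Scope ring_scope.

Section Families.
Variables (R : realType) (n : nat).
Local Notation vf := (vfield R n).
Local Notation vf0 := (@vf0 R n).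

Definition all_fields (P : vf -> Prop) (s : seq vf) :=
  forall i, (i < size s)%N -> P (nth vf0 s i).

Lemma all_fieldsP (P : vf -> Prop) s :
  all_fields P s <-> forall Y, Y \in s -> P Y.
Proof.
split=> [H Y /(nthP vf0) [i si <-]|H i si]; first exact: H.
by apply: H; rewrite mem_nth.
Qed.

Lemma all_fields_rcons (P : vf -> Prop) s Y :
  all_fields P (rcons s Y) <-> all_fields P s /\ P Y.
Proof.
split=> [H|[Hs HY] i].
  split=> [i si|]; last by have := H (size s); rewrite nth_rcons ltnn eqxx size_rcons; apply.
  by have := H i; rewrite nth_rcons si size_rcons; apply; rewrite ltnW.
rewrite size_rcons ltnS leq_eqVlt nth_rcons => /orP [/eqP ->|si].
  by rewrite ltnn eqxx.
by rewrite si; apply: Hs.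
Qed.

Lemma all_fields_take (P : vf -> Prop) s m :
  all_fields P s -> all_fields P (take m s).
Proof.
move=> H i; rewrite size_take_min leq_min => /andP [im ilt].
by rewrite nth_take //; apply: H.
Qed.

Lemma rref_of_rowops (U : set (pt R n)) Z Y : rref_of U Z Y ->
  exists Z', rowops U Z Z' /\ Y = take (size Y) Z'.
Proof. by case=> Z' [? ? _ _]; exists Z'. Qed.

End Families.

Section Annihilation.
Variables (R : realType) (n : nat).
Local Notation vf := (vfield R n).
Local Notation pt := (pt R n).
Local Notation vf0 := (@vf0 R n).

Definition annihilates (s : seq vf) (f : pt -> R) (x : pt) :=
  all_fields (fun Y => vf_apply Y f x = 0) s.

Lemma vf_apply_eq0 (Y : vf) f x : Y x = 0 -> vf_apply Y f x = 0.
Proof. by move=> Yx0; rewrite /vf_apply big1 // => k _; rewrite Yx0 mxE mul0r. Qed.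

Lemma vf_applyZ (c : pt -> R) (Y : vf) f x :
  vf_apply (fun y => c y *: Y y) f x = c x * vf_apply Y f x.
Proof. by rewrite /vf_apply mulr_sumr; apply: eq_bigr => k _; rewrite mxE mulrA. Qed.

Lemma vf_applyDZ (c : pt -> R) (Y Z : vf) f x :
  vf_apply (fun y => Y y + c y *: Z y) f x = vf_apply Y f x + c x * vf_apply Z f x.
Proof.
rewrite /vf_apply mulr_sumr -big_split; apply: eq_bigr => k _.
by rewrite !mxE mulrDl mulrA.
Qed.

Lemma annihilates_elem_rowop (U : set pt) s t f x :
  elem_rowop U s t -> annihilates s f x -> annihilates t f x.
Proof.
case=> {s t} [s i j si sj|s i c si _ _|s i j c si sj _ _] H m;
  rewrite /row_swap /row_scale /row_addmul size_mkseq => sm; rewrite nth_mkseq //.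
- by apply: H; do 2?case: ifP.
- by case: ifP => _; [rewrite vf_applyZ H ?mulr0|apply: H].
- by case: ifP => _; [rewrite vf_applyDZ !H ?mulr0 ?addr0|apply: H].
Qed.

Lemma annihilates_elem_rowop_inv (U : set pt) s t f x : U x ->
  elem_rowop U s t -> annihilates t f x -> annihilates s f x.
Proof.
move=> Ux; case=> {s t} [s i j si sj|s i c si _ c_neq0|s i j c si sj ij _];
  rewrite /annihilates /all_fields /row_swap /row_scale /row_addmul size_mkseq
  => H m sm.
- pose k := if m == i then j else if m == j then i else m.
  have sk : (k < size s)%N by rewrite /k; do 2?case: ifP.
  have := H k sk; rewrite nth_mkseq //.
  suff -> : (if k == i then j else if k == j then i else k) = m by [].
  by rewrite /k; repeat case: eqP => //=; lia.
- have := H m sm; rewrite nth_mkseq //; case: ifP => [/eqP ->|//].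
  rewrite vf_applyZ => /eqP.
  by rewrite mulf_eq0 (negPf (c_neq0 _ Ux)) => /eqP.
- have := H m sm; rewrite nth_mkseq //; case: ifP => [/eqP ->|//].
  rewrite vf_applyDZ; have := H j sj; rewrite nth_mkseq // eq_sym (negPf ij) => ->.
  by rewrite mulr0 addr0.
Qed.

Lemma annihilates_rowops (U : set pt) s t f x :
  rowops U s t -> annihilates s f x -> annihilates t f x.
Proof. by elim=> // {s t} s t u st _ IH /(annihilates_elem_rowop st). Qed.

Lemma annihilates_rowops_inv (U : set pt) s t f x : U x ->
  rowops U s t -> annihilates t f x -> annihilates s f x.
Proof.
by move=> Ux; elim=> // {s t} s t u st _ IH /IH /(annihilates_elem_rowop_inv Ux st).
Qed.

Lemma annihilates_rref (U : set pt) Z Y f x :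
  rref_of U Z Y -> annihilates Z f x -> annihilates Y f x.
Proof.
case/rref_of_rowops=> Z' [ZZ' ->] /(annihilates_rowops ZZ').
exact: all_fields_take.
Qed.

Lemma annihilates_rref_inv (U : set pt) Z Y f x : U x ->
  rref_of U Z Y -> annihilates Y f x -> annihilates Z f x.
Proof.
move=> Ux [Z' [ZZ' defY Z'0 _]] H; apply: (annihilates_rowops_inv Ux ZZ') => i iZ'.
have [iY|Yi] := ltnP i (size Y); last by rewrite vf_apply_eq0 // Z'0.
by have := H i iY; rewrite defY nth_take.
Qed.

Lemma annihilates_cont_inv (U : set pt) X k W Z f x :
  cont U X k W Z -> W x -> annihilates Z f x -> annihilates X f x.
Proof.
elim=> // {k W Z} k W Z W' Z' _ IH [Y [i [j [[_ _ W'W rr _] _ _ _ ->]]]] W'x.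
case/all_fields_rcons=> HY _; apply: IH; first exact: W'W.
exact: annihilates_rref_inv rr HY.
Qed.

End Annihilation.

Section Smoothness.
Variables (R : realType) (n : nat).
Local Notation pt := 'rV[R]_n.

Lemma near_eq0_differentiable (h : pt -> R) (x : pt) :
  (\forall y \near x, h y = 0) -> differentiable h x.
Proof.
move=> h0; have hx0 : h x = 0 := nbhs_singleton h0.
have h0' : \forall e \near (0 : pt), h (x + e) = 0.
  exact/(nbhs0P (fun y => h y = 0)).
have hdiff : h \o shift x = cst (h x) + \0 +o_ (0 : pt) id.
  apply/eqaddoP => eps eps0; apply: filterS h0' => e he.
  by rewrite !fctE /= (addrC e x) he hx0 addr0 subrr normr0 mulr_ge0 // ltW.
have dh0 : 'd h x = \0 :> (pt -> R).
  by apply/diff_unique; [move=> y; exact: cst_continuous|exact: hdiff].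
by apply/diff_locallyP; rewrite dh0; split => //; exact: cst_continuous.
Qed.

Lemma near_eq_differentiable (f g : pt -> R) (x : pt) :
  (\forall y \near x, f y = g y) -> differentiable f x -> differentiable g x.
Proof.
move=> fg df; have -> : g = f + (g - f) by apply/funext => y; rewrite /= addrC subrK.
apply: differentiableD => //; apply: near_eq0_differentiable.
by apply: filterS fg => y fgy; rewrite !fctE fgy subrr.
Qed.

Lemma near_eq_continuous (f g : pt -> R) (x : pt) :
  (\forall y \near x, f y = g y) -> {for x, continuous f} -> {for x, continuous g}.
Proof.
move=> fg cf; rewrite /prop_for /continuous_at -(nbhs_singleton fg).
exact: cvg_trans (near_eq_cvg fg) cf.
Qed.

Lemma Ck_eq_on k (U : set pt) (f g : pt -> R) : open U ->
  (forall x, U x -> f x = g x) -> Ck k U f -> Ck k U g.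
Proof.
move=> oU; have near_U x : U x -> \forall y \near x, U y.
  by move=> Ux; exact: open_nbhs_nbhs.
elim: k f g => [|k IH] f g fg /=.
  by move=> cf x Ux; apply: near_eq_continuous (cf x Ux); apply: filterS (near_U x Ux).
case=> df Cpf; split=> [x Ux|i].
  by apply: near_eq_differentiable (df x Ux); apply: filterS (near_U x Ux).
apply: IH (Cpf i) => x Ux; apply: near_eq_derive.
by apply: filterS (near_U x Ux) => y /fg.
Qed.

Lemma Ck_succ k (U : set pt) f : Ck k.+1 U f -> Ck k U f.
Proof.
elim: k f => [|k IH] f [df Cpf] /=.
  by move=> x Ux; apply/differentiable_continuous/df.
by split=> // i; apply: IH.
Qed.

Lemma Ck_subset k (U V : set pt) f : V `<=` U -> Ck k U f -> Ck k V f.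
Proof.
move=> VU; elim: k f => [|k IH] f /=; first by move=> cf x /VU; apply: cf.
by case=> df Cpf; split=> [x /VU|i]; [apply: df|apply/IH/Cpf].
Qed.

Lemma Ck_cst k (U : set pt) (c : R) : Ck k U (fun=> c).
Proof.
elim: k c => [|k IH] c /=; first by move=> x _; exact: cst_continuous.
split=> [x _|i]; first exact: differentiable_cst.
have -> : pd i (fun=> c) = fun=> 0 by apply/funext => y; rewrite /pd derive_cst.
exact: IH.
Qed.

Lemma pdD (f g : pt -> R) i x : differentiable f x -> differentiable g x ->
  pd i (fun y => f y + g y) x = pd i f x + pd i g x.
Proof. by move=> df dg; rewrite /pd (deriveD (diff_derivable df) (diff_derivable dg)). Qed.

Lemma pdM (f g : pt -> R) i x : differentiable f x -> differentiable g x ->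
  pd i (fun y => f y * g y) x = f x * pd i g x + g x * pd i f x.
Proof. by move=> df dg; rewrite /pd (deriveM (diff_derivable df) (diff_derivable dg)). Qed.

Lemma pd_sum (F : 'I_n -> pt -> R) i x : (forall l, differentiable (F l) x) ->
  pd i (fun y => \sum_(l < n) F l y) x = \sum_(l < n) pd i (F l) x.
Proof.
move=> dF; rewrite /pd -derive_sum; last by move=> l; exact: diff_derivable.
by congr derive; apply/funext => y; rewrite fct_sumE.
Qed.

Lemma pd_eq_cst (W : set pt) (g : pt -> R) c k x : open W -> W x ->
  (forall y, W y -> g y = c) -> pd k g x = 0.
Proof.
move=> oW Wx gc; rewrite /pd (@near_eq_derive _ _ _ g (cst c)) ?derive_cst //.
by apply: filterS (open_nbhs_nbhs (conj oW Wx)) => y /gc.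
Qed.

Lemma CkD k (U : set pt) f g : open U -> Ck k U f -> Ck k U g ->
  Ck k U (fun y => f y + g y).
Proof.
move=> oU; elim: k f g => [|k IH] f g /=.
  by move=> cf cg x Ux; apply: continuousD; [exact: cf|exact: cg].
case=> df Cpf [dg Cpg]; split=> [x Ux|i]; first exact: differentiableD (df x Ux) (dg x Ux).
apply: (@Ck_eq_on _ _ (fun y => pd i f y + pd i g y)) (IH _ _ (Cpf i) (Cpg i)) => //.
by move=> x Ux; rewrite pdD //; [exact: df|exact: dg].
Qed.

Lemma CkM k (U : set pt) f g : open U -> Ck k U f -> Ck k U g ->
  Ck k U (fun y => f y * g y).
Proof.
move=> oU; elim: k f g => [|k IH] f g /=.
  by move=> cf cg x Ux; apply: continuousM; [exact: cf|exact: cg].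
move=> Cf Cg; have [df Cpf] := Cf; have [dg Cpg] := Cg.
split=> [x Ux|i]; first exact: differentiableM (df x Ux) (dg x Ux).
apply: (@Ck_eq_on _ _ (fun y => f y * pd i g y + g y * pd i f y)) => //.
  by move=> x Ux; rewrite pdM //; [exact: df|exact: dg].
by apply: CkD => //; apply: IH => //; exact: Ck_succ.
Qed.

Lemma CkN k (U : set pt) f : open U -> Ck k U f -> Ck k U (fun y => - f y).
Proof.
move=> oU Cf; have -> : (fun y => - f y) = fun y => -1 * f y.
  by apply/funext => y; rewrite mulN1r.
by apply: CkM => //; exact: Ck_cst.
Qed.

Lemma Ck_sum k (U : set pt) (F : 'I_n -> pt -> R) : open U ->
  (forall l, Ck k U (F l)) -> Ck k U (fun y => \sum_(l < n) F l y).
Proof.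
move=> oU CF; have -> : (fun y => \sum_(l < n) F l y) = \sum_(l < n) F l.
  by apply/funext => y; rewrite fct_sumE.
by apply: big_ind => //; [exact: Ck_cst|move=> f g; exact: CkD].
Qed.

End Smoothness.

Section Termination.
Variables (R : realType) (n : nat).
Local Notation vf := (vfield R n).
Local Notation pt := (pt R n).
Local Notation vf0 := (@vf0 R n).

Lemma row_free_pivots m (M : 'M[R]_(m, n)) (p : nat -> 'I_n) (q : 'I_n) :
  (forall (a : 'I_m) b, (b < m.-1)%N -> M a (p b) = ((a : nat) == b)%:R) ->
  (forall a : 'I_m, (a : nat) = m.-1 -> M a q != 0) -> row_free M.
Proof.
move=> Mp Mq; rewrite -kermx_eq0; apply/eqP/row_matrixP => i; rewrite row0.
set u := row i _; have : u *m M = 0 by rewrite /u -row_mul mulmx_ker row0.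
clearbody u => uM0.
have entry_eq0 j (a0 : 'I_m) : (forall c : 'I_m, c != a0 -> u 0 c * M c j = 0) ->
    u 0 a0 * M a0 j = 0.
  move=> others; have := congr1 (fun v : 'rV[R]_n => v 0 j) uM0.
  by rewrite !mxE (bigD1 a0) //= big1 ?addr0.
have u_lt (a : 'I_m) : (a < m.-1)%N -> u 0 a = 0.
  move=> am; have := entry_eq0 (p a) a; rewrite Mp // eqxx mulr1; apply => c ca.
  by rewrite Mp // (_ : (c : nat) == a = false) ?mulr0 //; apply/negbTE.
apply/rowP => a; rewrite mxE; have [am|ma] := ltnP a m.-1; first exact: u_lt.
have a_last : (a : nat) = m.-1 by have := ltn_ord a; lia.
suff /eqP : u 0 a * M a q = 0 by rewrite mulf_eq0 (negPf (Mq a a_last)) orbF => /eqP.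
apply: entry_eq0 => c ca; rewrite u_lt ?mul0r //.
by have : (c : nat) != a by []; have := ltn_ord c; lia.
Qed.

Lemma rref_on_size (U : set pt) Y : rref_on U Y -> (size Y <= n)%N.
Proof.
case=> p [p_incr _].
have le_p i : (i < size Y)%N -> (i <= p i)%N.
  by elim: i => // i IH iY; have := p_incr i i.+1 (ltnSn i) iY; have := IH (ltnW iY); lia.
case def_s: (size Y) => [//|s]; have := le_p s; rewrite def_s => /(_ (ltnSn s)).
by have := ltn_ord (p s); lia.
Qed.

Lemma lie_diag (A : vf) x : lie A A x = 0.
Proof. by apply/rowP => k; rewrite !mxE subrr. Qed.

Lemma lie_pivot (W : set pt) (Y : seq vf) (p : nat -> 'I_n) a b c x :
  open W -> W x ->
  (forall d, (d < size Y)%N -> forall y, W y -> nth vf0 Y d y 0 (p c) = (d == c)%:R) ->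
  (a < size Y)%N -> (b < size Y)%N ->
  lie (nth vf0 Y a) (nth vf0 Y b) x 0 (p c) = 0.
Proof.
move=> oW Wx Yp aY bY; rewrite mxE /vf_apply.
by rewrite !big1 ?subrr // => k _; rewrite (pd_eq_cst _ oW Wx (Yp _ _)) ?mulr0.
Qed.

Lemma row_free_rref_rcons_lie (W : set pt) (Y : seq vf) a b x :
  open W -> rref_on W Y -> W x -> (a < size Y)%N -> (b < size Y)%N ->
  lie (nth vf0 Y a) (nth vf0 Y b) x != 0 ->
  row_free (coefmx (rcons Y (lie (nth vf0 Y a) (nth vf0 Y b))) x).
Proof.
move=> oW [p [_ Yp]] Wx aY bY /rV0Pn [q Lq].
have Yp_cst c : (c < size Y)%N ->
    forall d, (d < size Y)%N -> forall y, W y -> nth vf0 Y d y 0 (p c) = (d == c)%:R.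
  move=> cY d dY y Wy; have [Yc1 Yc0 _] := Yp c cY y Wy.
  by have [->|dc] := eqVneq d c; [rewrite Yc1|rewrite Yc0].
apply: (row_free_pivots (p := p) (q := q)) => [r c cY|r rY].
  rewrite size_rcons /= in cY.
  rewrite mxE nth_rcons; have [rY|] := ltnP r (size Y); first exact: Yp_cst.
  have rY : (r < (size Y).+1)%N by rewrite -(size_rcons Y (lie (nth vf0 Y a) (nth vf0 Y b))).
  move=> Yr.
  have -> : (r : nat) == size Y by lia.
  by rewrite (_ : (r : nat) == c = false) ?(lie_pivot oW Wx (Yp_cst c cY)) //; lia.
have {}rY : (r : nat) = size Y by rewrite rY size_rcons.
by rewrite mxE nth_rcons rY ltnn eqxx.
Qed.

Lemma round_continue_size (W : set pt) (Z : seq vf) W' Z' :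
  round_continue W Z W' Z' ->
  [/\ (2 < size Z')%N, (size Z' <= n.+1)%N,
      (forall x, W x -> \rank (coefmx Z x) < size Z')%N &
      exists2 x, W' x & \rank (coefmx Z' x) = size Z'].
Proof.
case=> Y [a [b [[oW' _ _ rr rkZ] aY bY [x [W'x Lx]] ->]]].
have [_ [_ _ _ rrY]] := rr; have Yn := rref_on_size rrY.
have ab : a != b by apply: contraNneq Lx => ->; rewrite lie_diag.
split; [rewrite size_rcons; lia|rewrite size_rcons; lia| |].
  by move=> y Wy; rewrite size_rcons ltnS rkZ.
by exists x => //; apply/eqP/(row_free_rref_rcons_lie oW' rrY).
Qed.

Lemma cont_size (U : set pt) X k W Z : cont U X k W Z -> (0 < k)%N ->
  [/\ (k.+1 < size Z)%N, (size Z <= n.+1)%N &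
      exists2 x, W x & \rank (coefmx Z x) = size Z].
Proof.
elim=> // {k W Z} k W Z W' Z' c_k IH /round_continue_size [Z'2 Z'n rkZ rkZ'] _.
split=> //; have [->|k0] := posnP k; first exact: Z'2.
by have [kZ _ [x Wx rkZx]] := IH k0; have := rkZ x Wx; lia.
Qed.

Lemma cont_lt (U : set pt) X k W Z : (0 < n)%N -> cont U X k W Z -> (k < n)%N.
Proof.
move=> n0 c_k; have [->//|k0] := posnP k.
by have [kZ Zn _] := cont_size c_k k0; lia.
Qed.

End Termination.

Section Schwarz.
Variables (R : realType) (n : nat).
Local Notation pt := 'rV[R]_n.

Lemma is_derive_line (F : pt -> R) (u y : pt) (s : R) :
  derivable F (s *: u + y) u ->
  is_derive s 1 (fun t : R => F (t *: u + y)) ('D_u F (s *: u + y)).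
Proof.
move=> dF.
have quotient_eq : (fun h : R => h^-1 *: (F ((h *: 1 + s) *: u + y) - F (s *: u + y))) =
    (fun h : R => h^-1 *: (F (h *: u + (s *: u + y)) - F (s *: u + y))).
  by apply/funext => h; rewrite -[h *: 1]/(h * 1) mulr1 scalerDl addrA.
by apply: DeriveDef; rewrite /derivable /derive /= quotient_eq.
Qed.

Lemma mvt_interval (g dg : R -> R) (h : R) : 0 < h ->
  (forall t, 0 <= t <= h -> is_derive t 1 g (dg t)) ->
  exists2 c, 0 < c < h & g h - g 0 = dg c * h.
Proof.
move=> h0 g_dg.
have cg : {within `[0, h], continuous g}.
  apply: continuous_in_subspaceT => t; rewrite inE /= in_itv /= => /g_dg [dg_t _].
  exact/differentiable_continuous/derivable1_diffP.
have g_dg' t : t \in `]0, h[ -> is_derive t 1 g (dg t).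
  by rewrite in_itv /= => /andP [t0 th]; apply: g_dg; rewrite !ltW.
have [c ch ->] := MVT h0 g_dg' cg.
by exists c; [rewrite in_itv /= in ch|rewrite subr0].
Qed.

Lemma mvt_line (F : pt -> R) (w y : pt) (h : R) : 0 < h ->
  (forall t, 0 <= t <= h -> differentiable F (t *: w + y)) ->
  exists2 c, 0 < c < h & F (h *: w + y) - F y = 'D_w F (c *: w + y) * h.
Proof.
move=> h0 dF.
have line_derive t : 0 <= t <= h ->
    is_derive t 1 (fun t => F (t *: w + y)) ('D_w F (t *: w + y)).
  by move/dF/diff_derivable/is_derive_line.
have [c ch] := mvt_interval h0 line_derive.
by rewrite scale0r add0r; exists c.
Qed.

Lemma mvt_line_diff (F : pt -> R) (w y1 y2 : pt) (h : R) : 0 < h ->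
  (forall t, 0 <= t <= h ->
     differentiable F (t *: w + y1) /\ differentiable F (t *: w + y2)) ->
  exists2 c, 0 < c < h &
    F (h *: w + y1) - F (h *: w + y2) - (F y1 - F y2) =
    ('D_w F (c *: w + y1) - 'D_w F (c *: w + y2)) * h.
Proof.
move=> h0 dF.
have line_derive t : 0 <= t <= h ->
    is_derive t 1 (fun t => F (t *: w + y1) - F (t *: w + y2))
      ('D_w F (t *: w + y1) - 'D_w F (t *: w + y2)).
  move/dF => [/diff_derivable dF1 /diff_derivable dF2].
  by have := is_deriveB (is_derive_line (dF1 w)) (is_derive_line (dF2 w)).
have [c ch] := mvt_interval h0 line_derive.
by rewrite !scale0r !add0r; exists c.
Qed.

Definition second_difference (F : pt -> R) (u v y : pt) (h : R) :=
  F (h *: u + (h *: v + y)) - F (h *: u + y) - (F (h *: v + y) - F y).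

Lemma second_differenceC F u v y h :
  second_difference F u v y h = second_difference F v u y h.
Proof. by rewrite /second_difference addrCA; ring. Qed.

Lemma second_difference_mvt (F : pt -> R) (u v y : pt) (h : R) : 0 < h ->
  (forall s t, 0 <= s <= h -> 0 <= t <= h ->
     differentiable F (s *: u + (t *: v + y)) /\
     differentiable ('D_u F) (s *: u + (t *: v + y))) ->
  exists s t, [/\ 0 <= s <= h, 0 <= t <= h &
    second_difference F u v y h = 'D_v ('D_u F) (s *: u + (t *: v + y)) * h * h].
Proof.
move=> h0 dF; have hh : 0 <= h <= h by apply/andP; split; rewrite // ltW.
have h00 : (0 : R) <= 0 <= h by apply/andP; split; rewrite // ltW.
have dF_0 s : 0 <= s <= h -> differentiable F (s *: u + y).
  by move=> sh; have [dF0 _] := dF s 0 sh h00; rewrite scale0r add0r in dF0.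
rewrite /second_difference.
have [s /andP [s0 sh] ->] := mvt_line_diff (y1 := h *: v + y) (y2 := y) h0
  (fun s sh => conj (dF s h sh hh).1 (dF_0 s sh)).
have sh' : 0 <= s <= h by rewrite !ltW.
have dDuF t : 0 <= t <= h -> differentiable ('D_u F) (t *: v + (s *: u + y)).
  by move=> th; rewrite addrCA; exact: (dF s t sh' th).2.
have [t /andP [t0 th] Dv] := mvt_line h0 dDuF.
exists s, t; split; rewrite ?ltW //.
by rewrite addrCA Dv addrCA.
Qed.

Lemma box_in_ball (x u v : pt) (d : R) : 0 < d -> exists2 h, 0 < h &
  forall s t, 0 <= s <= h -> 0 <= t <= h -> ball x d (s *: u + (t *: v + x)).
Proof.
move=> d0; pose C := `|u| + `|v| + 1; pose h := d / (2 * C).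
have C0 : 0 < C by rewrite /C ltr_wpDl // addr_ge0.
have h0 : 0 < h by rewrite divr_gt0 // mulr_gt0.
exists h => // s t /andP [s0 sh] /andP [t0 th].
have hC : h * C = d / 2 by rewrite /h; field; exact: lt0r_neq0.
rewrite -ball_normE /ball_ /= (addrC (t *: v) x) addrCA opprD addrA subrr add0r normrN.
apply: le_lt_trans (ler_normD _ _) _; rewrite !normrZ !ger0_norm //.
have su : s * `|u| <= h * `|u| by rewrite ler_wpM2r.
have tv : t * `|v| <= h * `|v| by rewrite ler_wpM2r.
have : s * `|u| + t * `|v| <= d / 2.
  by rewrite -hC /C !mulrDr mulr1; apply: le_trans (lerD su tv) _; rewrite lerDl ltW.
by move/le_lt_trans; apply; rewrite ltr_pdivrMr // ltr_pMr // ltr1n.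
Qed.

Lemma derive_comm (O : set pt) (f : pt -> R) (u v x : pt) : open O -> O x ->
  (forall y, O y -> differentiable f y) ->
  (forall y, O y -> differentiable ('D_u f) y) ->
  (forall y, O y -> differentiable ('D_v f) y) ->
  {for x, continuous ('D_v ('D_u f))} -> {for x, continuous ('D_u ('D_v f))} ->
  'D_v ('D_u f) x = 'D_u ('D_v f) x.
Proof.
move=> oO Ox df dDuf dDvf cDvu cDuv.
apply/eqP; rewrite -subr_eq0 -normr_le0; apply/ler_addgt0Pr => e e0; rewrite add0r.
have e2 : 0 < e / 2 by rewrite divr_gt0.
have cvu := @cvgr_dist_lt _ _ _ _ (nbhs_filter x) _ _ cDvu _ e2.
have cuv := @cvgr_dist_lt _ _ _ _ (nbhs_filter x) _ _ cDuv _ e2.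
have [d d0 ball_d] := (nbhs_ballP _ _).1
  (filterI (open_nbhs_nbhs (conj oO Ox)) (filterI cvu cuv)).
have [h h0 box] := box_in_ball x u v d0.
have in_O s t : 0 <= s <= h -> 0 <= t <= h -> O (s *: u + (t *: v + x)).
  by move=> sh th; have [] := ball_d _ (box s t sh th).
(* The second difference equals h^2 times each mixed partial at some point of
   the box; continuity at x makes both values close to their values at x. *)
have [s [t [sh th Duv]]] := second_difference_mvt (u := u) (v := v) h0
  (fun s t sh th => conj (df _ (in_O s t sh th)) (dDuf _ (in_O s t sh th))).
have in_O' a b : 0 <= a <= h -> 0 <= b <= h -> O (a *: v + (b *: u + x)).
  by move=> ah bh; rewrite addrCA; exact: in_O.
have [t' [s' [th' sh' Dvu]]] := second_difference_mvt (u := v) (v := u) h0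
  (fun a b ah bh => conj (df _ (in_O' a b ah bh)) (dDvf _ (in_O' a b ah bh))).
have hn0 : h != 0 by rewrite gt_eqF.
move: Dvu; rewrite -second_differenceC Duv => /mulIf-/(_ hn0)/mulIf-/(_ hn0) mixed.
have [_ [near_vu _]] := ball_d _ (box s t sh th).
have [_ [_ near_uv]] := ball_d _ (box s' t' sh' th').
rewrite addrCA in near_uv.
rewrite (splitr e); apply: le_trans (ler_distD ('D_v ('D_u f) (s *: u + (t *: v + x))) _ _) _.
rewrite [in X in _ + X]mixed [X in _ + X]distrC.
exact: lerD (ltW near_vu) (ltW near_uv).
Qed.

Lemma pd_comm (O : set pt) (f : pt -> R) i j x : open O -> O x -> Ck 2 O f ->
  pd j (pd i f) x = pd i (pd j f) x.
Proof.
move=> oO Ox [df Cpf]; have [dpi cpi] := Cpf i; have [dpj cpj] := Cpf j.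
exact: (derive_comm oO Ox df dpi dpj (cpi j x Ox) (cpj i x Ox)).
Qed.

End Schwarz.

Section Bracket.
Variables (R : realType) (n : nat).
Local Notation pt := 'rV[R]_n.
Local Notation vf := (vfield R n).

Lemma pd_vf_apply (C : vf) f k x :
  (forall l, differentiable (fun y => C y 0 l) x) ->
  (forall l, differentiable (pd l f) x) ->
  pd k (vf_apply C f) x =
    \sum_(l < n) (C x 0 l * pd k (pd l f) x + pd l f x * pd k (fun y => C y 0 l) x).
Proof.
move=> dC dpf; rewrite /vf_apply pd_sum; last by move=> l; apply: differentiableM.
by apply: eq_bigr => l _; rewrite pdM.
Qed.

Lemma vf_apply_lie (O : set pt) (A B : vf) f x : open O -> O x -> Ck 2 O f ->
  (forall l, differentiable (fun y => A y 0 l) x) ->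
  (forall l, differentiable (fun y => B y 0 l) x) ->
  vf_apply (lie A B) f x = vf_apply A (vf_apply B f) x - vf_apply B (vf_apply A f) x.
Proof.
move=> oO Ox Cf dA dB; have [_ Cpf] := Cf.
have dpf l : differentiable (pd l f) x by exact: (Cpf l).1 x Ox.
pose S (P Q : vf) := \sum_(k < n) \sum_(l < n) P x 0 k * Q x 0 l * pd k (pd l f) x.
pose T (P Q : vf) :=
  \sum_(k < n) \sum_(l < n) P x 0 k * (pd l f x * pd k (fun y => Q y 0 l) x).
have second_order (P Q : vf) : (forall l, differentiable (fun y => Q y 0 l) x) ->
    vf_apply P (vf_apply Q f) x = S P Q + T P Q.
  move=> dQ; rewrite /S /T -big_split; apply: eq_bigr => k _ /=.
  rewrite pd_vf_apply // mulr_sumr -big_split; apply: eq_bigr => l _ /=; ring.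
have S_sym : S A B = S B A.
  rewrite /S exchange_big; apply: eq_bigr => k _; apply: eq_bigr => l _ /=.
  by rewrite (pd_comm _ _ oO Ox Cf); ring.
have first_order : vf_apply (lie A B) f x = T A B - T B A.
  rewrite /T -sumrB; under eq_bigr do rewrite -sumrB.
  rewrite /vf_apply exchange_big; apply: eq_bigr => l _ /=.
  rewrite mxE mulrBl !mulr_suml -sumrB; apply: eq_bigr => k _; ring.
by rewrite first_order !second_order // S_sym; ring.
Qed.

Lemma vf_apply_lie_eq0 (O : set pt) (A B : vf) f : open O -> Ck 2 O f ->
  (forall l, Ck 1 O (fun y => A y 0 l)) -> (forall l, Ck 1 O (fun y => B y 0 l)) ->
  (forall y, O y -> vf_apply A f y = 0) -> (forall y, O y -> vf_apply B f y = 0) ->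
  forall x, O x -> vf_apply (lie A B) f x = 0.
Proof.
move=> oO Cf CA CB Af0 Bf0 x Ox.
have dA l : differentiable (fun y => A y 0 l) x by exact: (CA l).1 x Ox.
have dB l : differentiable (fun y => B y 0 l) x by exact: (CB l).1 x Ox.
rewrite (vf_apply_lie oO Ox Cf dA dB) /vf_apply !big1 ?subrr // => k _.
  by rewrite (pd_eq_cst _ oO Ox Af0) mulr0.
by rewrite (pd_eq_cst _ oO Ox Bf0) mulr0.
Qed.

End Bracket.

Section Invariants.
Variables (R : realType) (n : nat).
Local Notation pt := 'rV[R]_n.
Local Notation vf := (vfield R n).
Local Notation vf0 := (@vf0 R n).

Lemma vf_smooth_on_subset (W W' : set pt) (Y : vf) :
  W' `<=` W -> vf_smooth_on W Y -> vf_smooth_on W' Y.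
Proof. by move=> W'W sY l k; apply: Ck_subset W'W (sY l k). Qed.

Lemma vf_smooth_on_elem_rowop (W : set pt) s t : open W -> elem_rowop W s t ->
  all_fields (vf_smooth_on W) s -> all_fields (vf_smooth_on W) t.
Proof.
move=> oW; case=> {s t} [s i j si sj|s i c si sc _|s i j c si sj _ sc] H m;
  rewrite /row_swap /row_scale /row_addmul size_mkseq => sm; rewrite nth_mkseq //.
- by apply: H; do 2?case: ifP.
- case: ifP => _; last exact: H.
  move=> l k; apply: (@Ck_eq_on _ _ _ _ (fun x => c x * nth vf0 s i x 0 l)) => //.
    by move=> x _; rewrite mxE.
  exact: (CkM oW (sc k) (H i si l k)).
- case: ifP => _; last exact: H.
  move=> l k; apply: (@Ck_eq_on _ _ _ _
    (fun x => nth vf0 s i x 0 l + c x * nth vf0 s j x 0 l)) => //.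
    by move=> x _; rewrite !mxE.
  exact: (CkD oW (H i si l k) (CkM oW (sc k) (H j sj l k))).
Qed.

Lemma vf_smooth_on_rowops (W : set pt) s t : open W -> rowops W s t ->
  all_fields (vf_smooth_on W) s -> all_fields (vf_smooth_on W) t.
Proof. by move=> oW; elim=> // {s t} s t u st _ IH /(vf_smooth_on_elem_rowop oW st). Qed.

Lemma vf_smooth_on_rref (W : set pt) Z Y : open W -> rref_of W Z Y ->
  all_fields (vf_smooth_on W) Z -> all_fields (vf_smooth_on W) Y.
Proof.
move=> oW /rref_of_rowops [Z' [ZZ' ->]] /(vf_smooth_on_rowops oW ZZ').
exact: all_fields_take.
Qed.

Lemma vf_smooth_on_lie (W : set pt) (A B : vf) : open W ->
  vf_smooth_on W A -> vf_smooth_on W B -> vf_smooth_on W (lie A B).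
Proof.
move=> oW sA sB l k.
apply: (@Ck_eq_on _ _ _ _ (fun x =>
    \sum_(m < n) A x 0 m * pd m (fun y => B y 0 l) x +
    - \sum_(m < n) B x 0 m * pd m (fun y => A y 0 l) x)) => //.
  by move=> x _; rewrite mxE.
apply: (CkD oW _ (CkN oW _)); apply: (Ck_sum oW) => m.
  exact: (CkM oW (sA m k) ((sB l k.+1).2 m)).
exact: (CkM oW (sB m k) ((sA l k.+1).2 m)).
Qed.

Lemma vf_smooth_on_step1 (W W' : set pt) Z Y : step1 W Z W' Y ->
  all_fields (vf_smooth_on W) Z -> all_fields (vf_smooth_on W') Y.
Proof.
case=> oW' _ W'W rr _ sZ; apply: vf_smooth_on_rref oW' rr _ => m mZ.
exact: vf_smooth_on_subset W'W (sZ m mZ).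
Qed.

Lemma cont_smooth (U : set pt) X k W Z : open U ->
  all_fields (vf_smooth_on U) X -> cont U X k W Z ->
  open W /\ all_fields (vf_smooth_on W) Z.
Proof.
move=> oU sX; elim=> // {k W Z} k W Z W' Z' _ [oW sZ] [Y [i [j [st iY jY _ ->]]]].
have [oW' _ _ _ _] := st; have sY := vf_smooth_on_step1 st sZ.
by split=> //; apply/all_fields_rcons; split=> //; apply: vf_smooth_on_lie; auto.
Qed.

Lemma annihilates_cont (U : set pt) X k W Z (O : set pt) f : open U ->
  all_fields (vf_smooth_on U) X -> cont U X k W Z ->
  open O -> O `<=` W -> smooth_on O f ->
  (forall y, O y -> annihilates X f y) -> forall y, O y -> annihilates Z f y.
Proof.
move=> oU sX c_k; elim: c_k O => {k W Z} [//|k W Z W' Z' c_k IH rc] O oO OW' sf Xf.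
have [_ sZ] := cont_smooth oU sX c_k.
case: rc OW' => Y [i [j [st iY jY _ ->]]] OW'.
have [_ _ W'W rr _] := st; have sY := vf_smooth_on_step1 st sZ.
have Yf z : O z -> annihilates Y f z.
  move=> Oz; apply: annihilates_rref rr _.
  by apply: IH oO _ sf Xf z Oz => y /OW' /W'W.
have Ymf m : (m < size Y)%N -> forall z, O z -> vf_apply (nth vf0 Y m) f z = 0.
  by move=> mY z /Yf; apply.
have sYO m : (m < size Y)%N -> forall l, Ck 1 O (fun y => nth vf0 Y m y 0 l).
  by move=> mY l; apply: Ck_subset OW' _; exact: sY m mY l 1%N.
move=> y Oy; apply/all_fields_rcons; split; first exact: Yf.
exact: (vf_apply_lie_eq0 oO (sf 2%N) (sYO i iY) (sYO j jY) (Ymf i iY) (Ymf j jY) Oy).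
Qed.

Lemma joint_invariantP (F : seq vf) (O : set pt) f : joint_invariant F O f <->
  [/\ open O, smooth_on O f & forall x, O x -> annihilates F f x].
Proof.
split=> -[oO sf Ff]; split=> //.
  by move=> x Ox; apply/all_fieldsP => Y FY; exact: Ff.
by move=> Y FY x Ox; have /all_fieldsP := Ff x Ox; apply.
Qed.

End Invariants.

Theorem theorem1p2 (R : realType) (n : nat) (U : set 'rV[R]_n)
    (X : seq (vfield R n)) :
  (0 < n)%N -> open U ->
  (forall Xi, Xi \in X -> vf_smooth_on U Xi) ->
  (* termination: at most n iterations (k continuing ones plus the final one) *)
  (forall k W Z, cont U X k W Z -> (k < n)%N) /\
  (* the output family has the same local joint invariants *)
  (forall W V, final U X W V ->
     forall (O : set 'rV[R]_n) (f : 'rV[R]_n -> R), O `<=` W ->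
       (joint_invariant X O f <-> joint_invariant V O f)).
Proof.
move=> n0 oU /all_fieldsP sX; split=> [k W Z|W V [k [W0 [Z [c_k st _]]]] O f OW].
  exact: cont_lt.
have [_ _ WW0 rr _] := st.
rewrite !joint_invariantP; split=> -[oO sf Ff]; split=> // x Ox.
  apply: annihilates_rref rr _.
  by apply: annihilates_cont oU sX c_k oO _ sf Ff x Ox => y /OW /WW0.
apply: annihilates_cont_inv c_k (WW0 _ (OW _ Ox)) _.
exact: annihilates_rref_inv (OW _ Ox) rr (Ff x Ox).
Qed.
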